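(* For every integer $n\ge 3$, let $G_1$ be the graph obtained from the crown graph $H_{n,n}$ by adding one isolated vertex $v$. Then the co-bipartite graph $\overline{G_1}$ (which is $\overline{H_{n,n}}$ together with a vertex $v$ adjacent to all other vertices) is not word-representable.
   Context: A graph $G=(V,E)$ is word-representable if there exists a word $w$ over the alphabet $V$, containing every letter of $V$ at least once, such that for all distinct $x,y\in V$, the letters $x$ and $y$ alternate in $w$ (i.e., the subword of $w$ obtained by deleting all letters other than $x,y$ has no two equal consecutive letters) if and only if $xy\in E$. The crown graph $H_{n,n}$ is the bipartite graph obtained from the complete bipartite graph $K_{n,n}$ with parts $\{1,\dots,n\}$ and $\{1',\dots,n'\}$ by removing the perfect matching $\{ii' : 1\le i\le n\}$. $\overline{G}$ denotes the complement of $G$; a graph is co-bipartite if its complement is bipartite. *)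

From mathcomp Require Import all_boot.
Set Implicit Arguments. Unset Strict Implicit. Unset Printing Implicit Defensive.

(* A simple graph is a symmetric irreflexive relation E on a finite vertex type V. *)

Definition alternates (V : eqType) (w : seq V) (x y : V) : bool :=
  sorted (fun a b => a != b) (filter (fun z => (z == x) || (z == y)) w).

Definition word_representable (V : finType) (E : rel V) : Prop :=
  exists w : seq V, (forall x : V, x \in w) /\
    (forall x y : V, x != y -> (alternates w x y <-> E x y)).

Definition complement (V : finType) (E : rel V) : rel V :=
  fun x y => (x != y) && ~~ E x y.

(* Vertices: None = the extra vertex v, Some (inl i) = i, Some (inr i) = i'
   (indices 0..n-1 instead of 1..n). *)
Definition crown_vertex (n : nat) : finType := option ('I_n + 'I_n)%type.

Definition crownG1 (n : nat) : rel (crown_vertex n) :=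
  fun x y =>
    match x, y with
    | Some (inl i), Some (inr j) => i != j
    | Some (inr j), Some (inl i) => i != j
    | _, _ => false
    end.
Arguments crownG1 n x y : clear implicits.

From mathcomp Require Import all_boot.
From mathcomp Require Import all_order all_algebra zify.
Import Order.TTheory GRing.Theory.
Set Implicit Arguments. Unset Strict Implicit.

(* Since v is adjacent to every other vertex, every other letter x alternates
   with v, so the occurrences of x split w into v-blocks and x is described by
   a 0/1 "phase" function of the prefix length.  Two such letters alternate
   exactly when their phase functions are pointwise comparable.  Hence the
   neighbourhood of v, here the triangular prism on 0, 1, 2, 0', 1', 2', would
   be the comparability graph of a preorder, which a prism is not: orienting
   both triangles transitively forces a transitive arrow along a non-edge. *)

Local Open Scope ring_scope.

Definition prefix_count (T : eqType) (w : seq T) (z : T) (t : nat) : int :=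
  Posz (count_mem z (take t w)).

Lemma prefix_count0 (T : eqType) (w : seq T) z : prefix_count w z 0 = 0.
Proof. by case: w. Qed.

Lemma prefix_countS (T : eqType) a (w : seq T) z t :
  prefix_count (a :: w) z t.+1 = Posz (a == z) + prefix_count w z t.
Proof. by rewrite /prefix_count /= PoszD. Qed.

Definition balanced_counts (T : eqType) (w : seq T) (x y : T) (d : bool) : Prop :=
  forall t, 0 <= Posz d + prefix_count w x t - prefix_count w y t <= 1.

Section AlternationCount.
Variables (T : eqType) (x y : T).
Hypothesis neq_xy : x != y.

(* The boolean d records which of x, y is the (virtual) letter preceding w. *)
Lemma path_alternation_count w (d : bool) :
  balanced_counts w x y d <->
  path (fun a b => a != b) (if d then x else y)
    (filter (fun z => (z == x) || (z == y)) w).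
Proof.
have neq_yx : y != x by rewrite eq_sym.
elim: w d => [|a w IH] d /=.
  by split=> // _ t; rewrite /prefix_count /=; case: d => /=; lia.
case: (eqVneq a x) => [->|neq_ax] /=.
  split.
  - move=> H; have d_false : d = false.
      by have := H 1%N; rewrite !prefix_countS !prefix_count0 eqxx (negbTE neq_xy); case: (d) => /=; lia.
    subst d; rewrite neq_yx /=; apply/(IH true) => t.
    by have := H t.+1; rewrite !prefix_countS eqxx (negbTE neq_xy) /=; lia.
  - case: d; first by rewrite eqxx.
    move=> /andP[_ /(IH true) H] [|t]; first by rewrite !prefix_count0.
    by have := H t; rewrite !prefix_countS eqxx (negbTE neq_xy) /=; lia.
case: (eqVneq a y) => [->|neq_ay] /=.
  split.
  - move=> H; have d_true : d = true.
      by have := H 1%N; rewrite !prefix_countS !prefix_count0 eqxx (negbTE neq_yx); case: (d) => /=; lia.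
    subst d; rewrite neq_xy /=; apply/(IH false) => t.
    by have := H t.+1; rewrite !prefix_countS eqxx (negbTE neq_yx) /=; lia.
  - case: d; last by rewrite eqxx.
    move=> /andP[_ /(IH false) H] [|t]; first by rewrite !prefix_count0.
    by have := H t; rewrite !prefix_countS eqxx (negbTE neq_yx) /=; lia.
split.
- move=> H; apply/(IH d) => t.
  by have := H t.+1; rewrite !prefix_countS (negbTE neq_ax) (negbTE neq_ay).
- move=> /(IH d) H [|t]; first by rewrite !prefix_count0; case: (d).
  by rewrite !prefix_countS (negbTE neq_ax) (negbTE neq_ay) !add0r; exact: H.
Qed.

Lemma alternates_count w :
  alternates w x y <-> exists d, balanced_counts w x y d.
Proof.
have neq_yx : y != x by rewrite eq_sym.
rewrite /alternates.
case Hs: (filter _ w) => [|s0 s] /=.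
  by split=> // _; exists false; apply/(path_alternation_count w false); rewrite Hs.
have : s0 \in filter (fun z => (z == x) || (z == y)) w by rewrite Hs mem_head.
rewrite mem_filter => /andP[/orP[] /eqP Es0 _]; subst s0.
  split=> [hp|[d /(path_alternation_count w d)]]; last by rewrite Hs /=; case/andP.
  by exists false; apply/(path_alternation_count w false); rewrite Hs /= neq_yx.
split=> [hp|[d /(path_alternation_count w d)]]; last by rewrite Hs /=; case/andP.
by exists true; apply/(path_alternation_count w true); rewrite Hs /= neq_xy.
Qed.

End AlternationCount.

Definition le_pointwise (f g : nat -> int) : Prop := forall t, f t <= g t.

Definition comparable_by (A : Type) (le : A -> A -> Prop) (x y : A) : Prop :=
  le x y \/ le y x.

(* When x alternates with v, as witnessed by dx, [phase w v x dx] is 0/1-valued. *)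
Definition phase (T : eqType) (w : seq T) (v x : T) (dx : bool) (t : nat) : int :=
  1 - Posz dx + prefix_count w x t - prefix_count w v t.

Lemma alternates_phase_comparable (T : eqType) (w : seq T) v x y (dx dy : bool) :
  balanced_counts w v x dx -> balanced_counts w v y dy ->
  x != y ->
  (alternates w x y <-> comparable_by le_pointwise (phase w v x dx) (phase w v y dy)).
Proof.
move=> Hx Hy neq_xy; rewrite alternates_count // /comparable_by /le_pointwise /phase.
split=> [[d Hd]|[] H].
- case: d dx dy Hd Hx Hy => [] [] [] Hd Hx Hy;
    solve [ left => t; have := Hd t; have := Hx t; have := Hy t; lia
          | right => t; have := Hd t; have := Hx t; have := Hy t; lia ].
all: have := H 0%N; rewrite !prefix_count0.
all: case: dx dy Hx Hy H => [] [] Hx Hy H /= H0; first [ lia |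
    solve [ exists false => t; have := H t; have := Hx t; have := Hy t; lia
          | exists true => t; have := H t; have := Hx t; have := Hy t; lia ] ].
Qed.

Local Close Scope ring_scope.

Lemma comparability_not_prism (A : Type) (le : A -> A -> Prop)
    (le_transitive : forall a b c, le a b -> le b c -> le a c)
    (a0 a1 a2 b0 b1 b2 : A) :
  comparable_by le a0 a1 -> comparable_by le a0 a2 -> comparable_by le a1 a2 ->
  comparable_by le a0 b0 -> comparable_by le a1 b1 -> comparable_by le a2 b2 ->
  ~ comparable_by le a0 b1 -> ~ comparable_by le a0 b2 ->
  ~ comparable_by le a1 b0 -> ~ comparable_by le a1 b2 ->
  ~ comparable_by le a2 b0 -> ~ comparable_by le a2 b1 -> False.
Proof.
rewrite /comparable_by; move=> [?|?] [?|?] [?|?] [?|?] [?|?] [?|?] N1 N2 N3 N4 N5 N6;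
  solve [ match goal with N : ~ (le ?a ?b \/ le ?b ?a) |- _ =>
      apply: N; solve [left; eauto | right; eauto] end ].
Qed.

Theorem mainTheorem7 (n : nat) : 3 <= n ->
  ~ word_representable (complement (crownG1 n)).
Proof.
move=> n_gt2 [w [_ Hw]].
pose v : crown_vertex n := None.
pose a i : crown_vertex n := Some (inl i).
pose b i : crown_vertex n := Some (inr i).
pose i0 : 'I_n := Ordinal (ltn_trans (isT : 0 < 2) n_gt2).
pose i1 : 'I_n := Ordinal (ltn_trans (isT : 1 < 2) n_gt2).
pose i2 : 'I_n := Ordinal n_gt2.
have alt_v x : x != v -> exists dx, balanced_counts w v x dx.
  move=> neq_xv; apply/alternates_count; first by rewrite eq_sym.
  apply/(Hw v x); first by rewrite eq_sym.
  by rewrite /complement eq_sym neq_xv; case: x neq_xv.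
have [da0 Ha0] := alt_v (a i0) isT.
have [da1 Ha1] := alt_v (a i1) isT.
have [da2 Ha2] := alt_v (a i2) isT.
have [db0 Hb0] := alt_v (b i0) isT.
have [db1 Hb1] := alt_v (b i1) isT.
have [db2 Hb2] := alt_v (b i2) isT.
have adj_phase x y dx dy :
    balanced_counts w v x dx -> balanced_counts w v y dy -> x != y ->
    complement (crownG1 n) x y <->
    comparable_by le_pointwise (phase w v x dx) (phase w v y dy).
  move=> Hx Hy neq_xy.
  exact: iff_trans (iff_sym (Hw x y neq_xy)) (alternates_phase_comparable Hx Hy neq_xy).
apply: (@comparability_not_prism _ le_pointwise _
  (phase w v (a i0) da0) (phase w v (a i1) da1) (phase w v (a i2) da2)
  (phase w v (b i0) db0) (phase w v (b i1) db1) (phase w v (b i2) db2)).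
- by move=> f g h fg gh t; exact: le_trans (fg t) (gh t).
all: first [apply/adj_phase | move/adj_phase] => //.
Qed.
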